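(* Let $\mathbf{I}$ be a $d$-system of ideals in a ring $R$, $A:=\mathscr{A}(R,\mathbf{I})$, and $T_j:=\bigoplus_{i=1}^d\mathbb{T}_{ij}$ for $1\le j\le d$. Then, as left $A$-modules, $T_j\cong Ae_1/(Af_{d+1-j}Ae_1)=(A/J_{d+1-j})e_1$ for all $1\le j\le d$.
   Context: A $d$-system of ideals in $R$ is a collection $\{I_{ij}\mid1\le i,j\le d+1\}$ of two-sided ideals with $I_{ij}I_{jk}\subset I_{ik}$ and $I_{ij}=R$ for $i\ge j$. $\mathscr{A}(R,\mathbf{I}):=\bigoplus_{1\le i,j\le d}X_{ij}$, $X_{ij}:=I_{ij}/I_{i,d+1}$, with multiplication $(x+I_{i,d+1})(y+I_{k,d+1})=\delta_{jk}(xy+I_{i,d+1})\in X_{il}$ for $x\in I_{ij},y\in I_{kl}$. Put $e_k:=1+I_{k,d+1}\in X_{kk}$, $f_j:=\sum_{k>j}e_k$ for $0\le j\le d$ ($f_d=0$), $J_j:=Af_jA$. Define $\mathbb{T}_{kl}:=R/I_{k,d+2-l}$ for $1\le k,l\le d$, with $A$ acting on $\bigoplus_{k}\mathbb{T}_{kl}$ by $(x+I_{i,d+1})\cdot(r+I_{k,d+2-l})=\delta_{jk}(xr+I_{i,d+2-l})\in\mathbb{T}_{il}$ for $x\in I_{ij}$, $r\in R$. *)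

From HB Require Import structures.
From mathcomp Require Import all_boot all_order all_algebra.
Set Implicit Arguments. Unset Strict Implicit. Unset Printing Implicit Defensive.
Import GRing.Theory.
Local Open Scope ring_scope.

(* The ideals I_{ij} are
   indexed by natural numbers 1 <= i,j <= d+1 exactly as in the paper; the
   values of I outside this range are irrelevant.  Matrix indices
   i : 'I_d correspond to the paper's index i+1. *)

Definition two_sided_ideal (R : pzRingType) (S : R -> Prop) : Prop :=
  [/\ S 0,
      (forall x y, S x -> S y -> S (x - y)),
      (forall r x, S x -> S (r * x)) &
      (forall r x, S x -> S (x * r))].

Definition dsystem (R : pzRingType) (d : nat) (I : nat -> nat -> R -> Prop) : Prop :=
  [/\ (forall i j, (1 <= i <= d.+1)%N -> (1 <= j <= d.+1)%N ->
         two_sided_ideal (I i j)),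
      (forall i j k x y, (1 <= i <= d.+1)%N -> (1 <= j <= d.+1)%N ->
         (1 <= k <= d.+1)%N -> I i j x -> I j k y -> I i k (x * y)) &
      (forall i j r, (1 <= j <= i)%N -> (i <= d.+1)%N -> I i j r)].

(* Elements of A = (+)_{i,j} X_{ij}, X_{ij} = I_{ij}/I_{i,d+1}, are
   represented by d x d matrices x with x_{ij} in I_{ij}; the product
   (x+I)(y+I) = delta_{jk}(xy + I) extended bilinearly is matrix product. *)
Definition inA (R : pzRingType) (d : nat) (I : nat -> nat -> R -> Prop)
  (x : 'M[R]_d) : Prop :=
  forall i j : 'I_d, I i.+1 j.+1 (x i j).

Definition nullA (R : pzRingType) (d : nat) (I : nat -> nat -> R -> Prop)
  (x : 'M[R]_d) : Prop :=
  forall i j : 'I_d, I i.+1 d.+1 (x i j).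

Definition e1 (R : pzRingType) (d : nat) : 'M[R]_d :=
  \matrix_(i, j) ((nat_of_ord i == 0%N) && (nat_of_ord j == 0%N))%:R.

(* f_m = sum_{k > m} e_k   (paper indices k = 1..d) *)
Definition fsum (R : pzRingType) (d m : nat) : 'M[R]_d :=
  \sum_(k < d | (m < k.+1)%N) delta_mx k k.

(* z (an element of A) lies in A f_m A e_1 = { sum_n a_n f_m b_n e_1 }
   modulo the zero of A. *)
Definition in_AfAe1 (R : pzRingType) (d : nat) (I : nat -> nat -> R -> Prop)
  (m : nat) (z : 'M[R]_d) : Prop :=
  exists (n : nat) (a b : 'I_n -> 'M[R]_d),
    (forall k, inA I (a k)) /\ (forall k, inA I (b k)) /\
    nullA I (z - \sum_(k < n) (a k *m fsum R d m *m b k *m e1 R d)).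

(* T_l = (+)_k TT_{kl}, TT_{kl} = R/I_{k,d+2-l}: represented by column
   vectors v in R^d; v represents 0 iff v_k in I_{k,d+2-l} for all k.
   The A-action (x + I)(r + I) = delta_{jk}(xr + I) is x *m v. *)
Definition nullT (R : pzRingType) (d : nat) (I : nat -> nat -> R -> Prop)
  (l : nat) (v : 'cV[R]_d) : Prop :=
  forall k : 'I_d, I k.+1 (d.+2 - l)%N (v k 0).

(* An isomorphism of left A-modules T_l ~= A e_1 / (A f_m A e_1), given on
   representatives: phi v (in A) represents the class of (phi v) e_1. *)
Definition Amod_iso (R : pzRingType) (d : nat) (I : nat -> nat -> R -> Prop)
  (l m : nat) (phi : 'cV[R]_d -> 'M[R]_d) : Prop :=
  (forall v, inA I (phi v)) /\
  [/\
      (forall v w, nullT I l (v - w) ->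
         in_AfAe1 I m (phi v *m e1 R d - phi w *m e1 R d)),
      (forall v w, in_AfAe1 I m
         (phi (v + w) *m e1 R d - (phi v *m e1 R d + phi w *m e1 R d))),
      (forall x v, inA I x ->
         in_AfAe1 I m (phi (x *m v) *m e1 R d - x *m (phi v *m e1 R d))),
      (forall v w, in_AfAe1 I m (phi v *m e1 R d - phi w *m e1 R d) ->
         nullT I l (v - w)) &
      (forall a, inA I a -> exists v,
         in_AfAe1 I m (phi v *m e1 R d - a *m e1 R d))].

(* The map v |-> v e_{11} (v placed in the first column) sends T_l onto
   A e_1, and a column u e_{11} lies in A f_m A e_1, m = d+1-l, exactly when
   u_i is in I_{i,m+1} for every i: entries of a f_m have their column index
   > m, so they lie in I_{i,m+1}, and conversely
   u e_{1,m+1} . e_{m+1} . e_{m+1,1} = u e_{11}. Since d+2-l = m+1, this is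
   precisely the kernel of T_l. *)
From HB Require Import structures.
From mathcomp Require Import all_boot all_order all_algebra.
Local Open Scope ring_scope.
Set Implicit Arguments. Unset Strict Implicit.
Import GRing.Theory.

Section TwoSidedIdeal.
Variables (R : pzRingType) (J : R -> Prop).
Hypothesis idealJ : two_sided_ideal J.

Lemma ideal0 : J 0.
Proof. by case: idealJ. Qed.

Lemma idealMl r x : J x -> J (r * x).
Proof. by case: idealJ => _ _ + _; apply. Qed.

Lemma idealMr x r : J x -> J (x * r).
Proof. by case: idealJ => _ _ _; apply. Qed.

Lemma idealD x y : J x -> J y -> J (x + y).
Proof.
case: idealJ => J0 JB _ _ Jx Jy.
by have := JB x (0 - y) Jx (JB 0 y J0 Jy); rewrite sub0r opprK.
Qed.

Lemma ideal_sum (T : Type) (r : seq T) (P : pred T) (F : T -> R) :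
  (forall k, P k -> J (F k)) -> J (\sum_(k <- r | P k) F k).
Proof. by move=> JF; apply: big_ind => //; [exact: ideal0 | exact: idealD]. Qed.

Lemma ideal_mulmx_row m n p (Y : 'M[R]_(m, n)) (M : 'M[R]_(n, p)) i k :
  (forall l, J (Y i l)) -> J ((Y *m M) i k).
Proof. by move=> JY; rewrite mxE; apply: ideal_sum => l _; apply: idealMr. Qed.

End TwoSidedIdeal.

Lemma mulmx_deltaE (R : pzRingType) m n p (z : 'M[R]_(m, n)) (a : 'I_n) (b : 'I_p) i k :
  (z *m delta_mx a b) i k = z i a * (k == b)%:R.
Proof.
rewrite mxE (bigD1 a) //= big1 ?addr0; first by rewrite mxE eqxx.
by move=> l /negbTE nla; rewrite mxE nla mulr0.
Qed.

Lemma e1_delta (R : pzRingType) n : e1 R n.+1 = delta_mx 0 0.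
Proof.
apply/matrixP => a b; rewrite !mxE.
by congr (_%:R); congr (_ && _); apply/eqP/eqP => [ha | -> //]; exact: val_inj.
Qed.

Lemma in_AfAe1_null (R : pzRingType) d (I : nat -> nat -> R -> Prop) m (z : 'M[R]_d) :
  nullA I z -> in_AfAe1 I m z.
Proof. by move=> nullz; exists 0%N, (fun=> 0), (fun=> 0); do 2?split; rewrite ?big_ord0 ?subr0 //; case. Qed.

Section DSystem.
Variables (R : pzRingType) (n : nat) (I : nat -> nat -> R -> Prop).
Hypothesis dsysI : dsystem n.+1 I.

Let ord_range (i : 'I_n.+1) : (1 <= i.+1 <= n.+2)%N.
Proof. by rewrite /= ltnS ltnW. Qed.

Lemma dsystem_ideal (i : 'I_n.+1) m : (m <= n.+1)%N -> two_sided_ideal (I i.+1 m.+1).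
Proof. by case: dsysI => idealI _ _ lemn; apply: idealI; rewrite ?ord_range /= ?ltnS. Qed.

Lemma dsystem_ideal0 (i : 'I_n.+1) m : (m <= n.+1)%N -> I i.+1 m.+1 0.
Proof. by move=> lemn; apply: ideal0 (dsystem_ideal i lemn). Qed.

Lemma dsystem_col1 (i : 'I_n.+1) x : I i.+1 1 x.
Proof. by case: dsysI => _ _ lowI; apply: lowI => //; exact: leqW. Qed.

Lemma dsystem_antimono (i : 'I_n.+1) m p x :
  (m <= p <= n.+1)%N -> I i.+1 p.+1 x -> I i.+1 m.+1 x.
Proof.
case/andP=> lemp lepn Ix; rewrite -(mulr1 x).
case: dsysI => _ mulI lowI; apply: (mulI _ p.+1) => //; rewrite ?ord_range /= ?ltnS //.
  exact: leq_trans lepn.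
by apply: lowI; rewrite // ltnS.
Qed.

Lemma mulmx_fsum_entry m (a : 'M[R]_n.+1) (i p : 'I_n.+1) :
  (m <= n.+1)%N -> inA I a -> I i.+1 m.+1 ((a *m fsum R n.+1 m) i p).
Proof.
move=> lemn inAa; rewrite /fsum mulmx_sumr summxE.
apply: (ideal_sum (dsystem_ideal i lemn)) => k ltmk.
rewrite mulmx_deltaE; apply: (idealMr (dsystem_ideal i lemn)).
by apply: (dsystem_antimono (p := k)) (inAa i k); rewrite -ltnS ltmk; exact: ltnW.
Qed.

Lemma in_AfAe1_entry m (z : 'M[R]_n.+1) (i k : 'I_n.+1) :
  (m <= n.+1)%N -> in_AfAe1 I m z -> I i.+1 m.+1 (z i k).
Proof.
move=> lemn [p [a [b [inAa [_ nullz]]]]].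
have idealI := dsystem_ideal i lemn.
set S := \sum_(l < p) _ in nullz.
rewrite -(subrK S z) mxE; apply: idealD => //.
  by apply: (dsystem_antimono _ (nullz i k)); rewrite lemn /=.
rewrite summxE; apply: ideal_sum => // l _.
do 2!apply: ideal_mulmx_row => // ?.
exact: mulmx_fsum_entry.
Qed.

Lemma in_AfAe1_col m (u : 'cV[R]_n.+1) :
  (m <= n.+1)%N -> (forall i : 'I_n.+1, I i.+1 m.+1 (u i 0)) ->
  in_AfAe1 I m (u *m delta_mx 0 0).
Proof.
rewrite leq_eqVlt => /orP[/eqP -> | ltmn] Iu.
  apply: in_AfAe1_null => i k; rewrite mulmx_deltaE.
  by case: eqP => _; rewrite ?mulr1 ?mulr0 //; exact: (dsystem_ideal0 i (leqnn _)).
pose mo := Ordinal ltmn.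
exists 1%N, (fun=> u *m delta_mx 0 mo), (fun=> delta_mx mo 0); split; [|split].
- move=> _ i k; rewrite mulmx_deltaE.
  case: eqP => [-> | _]; rewrite ?mulr1 ?mulr0; first exact: Iu.
  exact: (dsystem_ideal0 i (ltnW (ltn_ord k))).
- move=> _ i k; rewrite mxE; case: andP => [[_ /eqP ->] | _]; first exact: dsystem_col1.
  exact: (dsystem_ideal0 i (ltnW (ltn_ord k))).
- have fsum_mo : delta_mx 0 mo *m fsum R n.+1 m = delta_mx 0 mo :> 'M_(1, n.+1).
    rewrite /fsum mulmx_sumr (bigD1 mo) //= mul_delta_mx big1 ?addr0 // => k /andP[_ nkmo].
    by rewrite mul_delta_mx_cond eq_sym (negbTE nkmo).
  rewrite big_ord1 e1_delta -!mulmxA mul_delta_mx (mulmxA (delta_mx 0 mo)) fsum_mo.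
  rewrite mul_delta_mx subrr => i k; rewrite mxE.
  exact: (dsystem_ideal0 i (leqnn _)).
Qed.

Lemma in_AfAe1_colP m (u : 'cV[R]_n.+1) : (m <= n.+1)%N ->
  in_AfAe1 I m (u *m delta_mx 0 0) <-> (forall i : 'I_n.+1, I i.+1 m.+1 (u i 0)).
Proof.
move=> lemn; split=> [inu i | ]; last exact: in_AfAe1_col.
have := in_AfAe1_entry i 0 lemn inu.
by rewrite mulmx_deltaE mulr1.
Qed.

Lemma Amod_iso_first_col l : (1 <= l <= n.+1)%N ->
  Amod_iso I l (n.+2 - l) (fun v : 'cV[R]_n.+1 => v *m delta_mx 0 0).
Proof.
case/andP=> l_gt0 leln; set m := (n.+2 - l)%N.
have lemn : (m <= n.+1)%N by rewrite leq_subLR -add1n leq_add2r.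
have nullT_m v : nullT I l v = (forall i : 'I_n.+1, I i.+1 m.+1 (v i 0)).
  by rewrite /nullT -subSn // ltnW.
have in0 : in_AfAe1 I m (0 : 'M[R]_n.+1).
  by apply: in_AfAe1_null => i k; rewrite mxE; exact: (dsystem_ideal0 i (leqnn _)).
have e1_id (v : 'cV[R]_n.+1) : v *m delta_mx 0 0 *m e1 R n.+1 = v *m delta_mx 0 0.
  by rewrite e1_delta -mulmxA mul_delta_mx.
split=> [v i k | ].
  rewrite mulmx_deltaE; case: eqP => [-> | _]; rewrite ?mulr1 ?mulr0; first exact: dsystem_col1.
  exact: (dsystem_ideal0 i (ltnW (ltn_ord k))).
split=> [v w | v w | x v _ | v w | a _]; rewrite ?e1_id.
- by rewrite -mulmxBl nullT_m => Ivw; apply/in_AfAe1_colP.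
- by rewrite mulmxDl subrr.
- by rewrite mulmxA subrr.
- by rewrite -mulmxBl nullT_m => /in_AfAe1_colP; apply.
- by exists (col 0 a); rewrite e1_id e1_delta colE -mulmxA mul_delta_mx subrr.
Qed.

End DSystem.

Theorem lemma4p3 (R : pzRingType) (d : nat) (I : nat -> nat -> R -> Prop)
  (hI : dsystem d I) (j : nat) (hj : (1 <= j <= d)%N) :
  exists phi : 'cV[R]_d -> 'M[R]_d, Amod_iso I j (d.+1 - j) phi.
Proof.
case: d hI hj => [|n] hI hj; first by case/andP: hj => /leq_trans h /h.
by exists (fun v => v *m delta_mx 0 0); apply: Amod_iso_first_col.
Qed.
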